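(* Let $L\ge1$, $\delta>0$, $\lambda^0\in(0,\infty)^L$, continuous strictly increasing $c_1,\dots,c_L:[0,\infty)\to\mathbb{R}$, and for $m\in\mathbb{N}$ let $f_m,g_m:[0,\infty)^L\to\mathbb{R}$ be $$f_m(\beta)=\sum_{i=1}^L c_i(\beta_i)+\delta\Big(1-\prod_{i=1}^L\big(1-\tilde\alpha(\beta_i,m\lambda^0_i)\big)\Big),\quad g_m(\beta)=\sum_{i=1}^L c_i(\beta_i)+\delta\Big(1-\prod_{i=1}^L\big(1-UB(\beta_i,m\lambda^0_i)\big)\Big).$$ Suppose $\beta^F_m$ minimizes $f_m$ over $[0,\infty)^L$ and $\beta^G_m$ minimizes $g_m$ over $[0,\infty)^L$. Then $$\lim_{m\to\infty}\big(f_m(\beta^G_m)-f_m(\beta^F_m)\big)=0.$$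
   Context: $\phi,\Phi$ are the standard normal density and distribution function. For $\lambda>0$ and real $n\ge 0$, $\bar\alpha(n,\lambda)=\min\Big\{1,\big[\lambda\int_0^\infty t e^{-\lambda t}(1+t)^{n-1}\,dt\big]^{-1}\Big\}$ is the continuous Erlang-C function, and $\tilde\alpha(\beta,\lambda)=\bar\alpha(\lambda+\beta\sqrt\lambda,\lambda)$. For $\lambda>0,\beta\ge 0$ set $n=\lambda+\beta\sqrt{\lambda}$, $\rho=\lambda/n$, $a=\sqrt{-2n(1-\rho+\ln\rho)}$, $\gamma=(n-\lambda)/\sqrt{n}$, and $UB(\beta,\lambda)=\left[\rho+\gamma\left(\frac{\Phi(a)}{\phi(a)}+\frac{2}{3\sqrt{n}}\right)\right]^{-1}$. It is known (Janssen, van Leeuwaarden and Zwart) that $\tilde\alpha(\beta,\lambda)\le UB(\beta,\lambda)$ for all $\lambda,\beta>0$. *)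

From Stdlib Require Import Reals Lra ClassicalEpsilon.
Open Scope R_scope.

Definition is_int_to_inf (f : R -> R) (a I : R) : Prop :=
  forall eps : R, 0 < eps -> exists B : R, forall b : R, B <= b ->
    exists pr : Riemann_integrable f a b, Rabs (RiemannInt pr - I) < eps.

Definition is_int_from_minf (f : R -> R) (a I : R) : Prop :=
  forall eps : R, 0 < eps -> exists B : R, forall b : R, b <= B ->
    exists pr : Riemann_integrable f b a, Rabs (RiemannInt pr - I) < eps.

Definition int_to_inf (f : R -> R) (a : R) : R :=
  epsilon (inhabits 0) (fun I => is_int_to_inf f a I).
Definition int_from_minf (f : R -> R) (a : R) : R :=
  epsilon (inhabits 0) (fun I => is_int_from_minf f a I).

Definition phi (x : R) : R := exp (- (x * x) / 2) / sqrt (2 * PI).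
Definition Phi (x : R) : R := int_from_minf phi x.

(* continuous Erlang-C function  alpha_bar(n, lambda) *)
Definition alpha_bar (n lam : R) : R :=
  Rmin 1 (/ (lam * int_to_inf (fun t => t * exp (- lam * t) * Rpower (1 + t) (n - 1)) 0)).

Definition alpha_tilde (beta lam : R) : R := alpha_bar (lam + beta * sqrt lam) lam.

Definition UB (beta lam : R) : R :=
  let n := lam + beta * sqrt lam in
  let rho := lam / n in
  let a := sqrt (- 2 * n * (1 - rho + ln rho)) in
  let gam := (n - lam) / sqrt n in
  / (rho + gam * (Phi a / phi a + 2 / (3 * sqrt n))).

(* finite sum / product over indices 0 .. L-1 *)
Fixpoint sumL (L : nat) (f : nat -> R) : R :=
  match L with O => 0 | S k => sumL k f + f k end.
Fixpoint prodL (L : nat) (f : nat -> R) : R :=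
  match L with O => 1 | S k => prodL k f * f k end.

Definition f_obj (L : nat) (c : nat -> R -> R) (delta : R) (lam0 : nat -> R)
  (m : nat) (beta : nat -> R) : R :=
  sumL L (fun i => c i (beta i))
  + delta * (1 - prodL L (fun i => 1 - alpha_tilde (beta i) (INR m * lam0 i))).

Definition g_obj (L : nat) (c : nat -> R -> R) (delta : R) (lam0 : nat -> R)
  (m : nat) (beta : nat -> R) : R :=
  sumL L (fun i => c i (beta i))
  + delta * (1 - prodL L (fun i => 1 - UB (beta i) (INR m * lam0 i))).

Definition nonneg_vec (L : nat) (beta : nat -> R) : Prop :=
  forall i, (i < L)%nat -> 0 <= beta i.

(* Write [lambda = w^2] and [n = w^2 + b w].  Substituting [t = s / w] in the
   Erlang integral gives [alpha_tilde b (w^2) = min 1 (1 / A w b)] with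
   [A w b = int_0^oo s exp ((n - 1) ln (1 + s/w) - w s) ds], while
   [Phi a / phi a = Mg a := int_0^oo exp (a s - s^2/2) ds] gives
   [UB b (w^2) = 1 / D w b] with an explicit [D].  Both [A w b] and [D w b]
   tend to [Ng b = int_0^oo s exp (b s - s^2/2) ds = 1 + b Mg b] as [w -> oo],
   uniformly for [b] in a bounded range, and both [alpha_tilde] and [UB] are
   small uniformly for [b] large.  Hence [sup_(b >= 0) |alpha_tilde - UB| -> 0]
   as [lambda -> oo] (Lemma [alpha_tilde_UB_uniform]).  Since products of
   numbers in [0, 1] are 1-Lipschitz, [f_m] and [g_m] are then uniformly close
   on [[0, oo)^L], and a minimizer of [g_m] is nearly optimal for [f_m]. *)

From Coquelicot Require Import Coquelicot.
From Stdlib Require Import Reals Lra Lia ClassicalEpsilon.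
Open Scope R_scope.

Definition tends_at_infty (F : R -> R) (I : R) : Prop :=
  forall eps, 0 < eps -> exists B, forall b, B <= b -> Rabs (F b - I) < eps.

Lemma tends_at_infty_le F G I J d : tends_at_infty F I -> tends_at_infty G J ->
  (exists c0, forall c, c0 <= c -> F c <= G c + d) -> I <= J + d.
Proof.
  intros HF HG [c0 Hc].
  destruct (Rle_dec I (J + d)) as [h|h]; [exact h|].
  set (e := (I - J - d) / 2).
  destruct (HF e ltac:(unfold e; lra)) as [B1 H1].
  destruct (HG e ltac:(unfold e; lra)) as [B2 H2].
  set (b := Rmax c0 (Rmax B1 B2)).
  assert (b1 : B1 <= b) by (unfold b; eapply Rle_trans; [|apply Rmax_r]; apply Rmax_l).
  assert (b2 : B2 <= b) by (unfold b; eapply Rle_trans; [|apply Rmax_r]; apply Rmax_r).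
  specialize (H1 b b1). specialize (H2 b b2). specialize (Hc b (Rmax_l _ _)).
  apply Rabs_def2 in H1. apply Rabs_def2 in H2. unfold e in *. lra.
Qed.

Lemma tends_at_infty_unique F I J : tends_at_infty F I -> tends_at_infty F J -> I = J.
Proof.
  intros H1 H2.
  assert (I <= J + 0) by (apply (tends_at_infty_le F F I J 0 H1 H2); exists 0; intros; lra).
  assert (J <= I + 0) by (apply (tends_at_infty_le F F J I 0 H2 H1); exists 0; intros; lra).
  lra.
Qed.

Lemma tends_at_infty_approx F G I : tends_at_infty F I ->
  (forall eps, 0 < eps -> exists B, forall c, B <= c -> Rabs (G c - F c) < eps) ->
  tends_at_infty G I.
Proof.
  intros HF HG eps He.
  destruct (HF (eps/2) ltac:(lra)) as [B1 H1]. destruct (HG (eps/2) ltac:(lra)) as [B2 H2].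
  exists (Rmax B1 B2). intros b Hb.
  specialize (H1 b (Rle_trans _ _ _ (Rmax_l _ _) Hb)).
  specialize (H2 b (Rle_trans _ _ _ (Rmax_r _ _) Hb)).
  replace (G b - I) with ((G b - F b) + (F b - I)) by ring.
  eapply Rle_lt_trans; [apply Rabs_triang|]. lra.
Qed.

Lemma tends_at_infty_ext F G I : (forall c, F c = G c) ->
  tends_at_infty F I -> tends_at_infty G I.
Proof.
  intros E HF. apply (tends_at_infty_approx F G I HF).
  intros eps He. exists 0. intros c _. rewrite E, Rminus_diag, Rabs_R0. exact He.
Qed.

Lemma tends_at_infty_shift F I a : tends_at_infty F I -> tends_at_infty (fun c => F (a + c)) I.
Proof.
  intros HF eps He. destruct (HF eps He) as [B HB].
  exists (B - a). intros b Hb. apply HB. lra.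
Qed.

Lemma tends_at_infty_affine F I u v : tends_at_infty F I ->
  tends_at_infty (fun c => u + v * F c) (u + v * I).
Proof.
  intros HF eps He.
  assert (Hv : 0 <= Rabs v) by apply Rabs_pos.
  destruct (HF (eps / (Rabs v + 1))) as [B HB]; [apply Rdiv_lt_0_compat; lra|].
  exists B. intros b Hb. specialize (HB b Hb).
  replace (u + v * F b - (u + v * I)) with (v * (F b - I)) by ring.
  rewrite Rabs_mult.
  assert (Rabs v * Rabs (F b - I) <= Rabs v * (eps / (Rabs v + 1))).
  { apply Rmult_le_compat_l; lra. }
  assert (Rabs v * (eps / (Rabs v + 1)) < eps).
  { apply (Rmult_lt_reg_r (Rabs v + 1)); [lra|]. unfold Rdiv.
    replace (Rabs v * (eps * / (Rabs v + 1)) * (Rabs v + 1)) with (Rabs v * eps)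
      by (field; lra). nra. }
  lra.
Qed.

Lemma tends_at_infty_plus F G I J : tends_at_infty F I -> tends_at_infty G J ->
  tends_at_infty (fun c => F c + G c) (I + J).
Proof.
  intros HF HG eps He.
  destruct (HF (eps/2) ltac:(lra)) as [B1 H1]. destruct (HG (eps/2) ltac:(lra)) as [B2 H2].
  exists (Rmax B1 B2). intros b Hb.
  specialize (H1 b (Rle_trans _ _ _ (Rmax_l _ _) Hb)).
  specialize (H2 b (Rle_trans _ _ _ (Rmax_r _ _) Hb)).
  replace (F b + G b - (I + J)) with ((F b - I) + (G b - J)) by ring.
  eapply Rle_lt_trans; [apply Rabs_triang|]. lra.
Qed.

Lemma is_int_to_inf_tends f a I :
  (forall b, a <= b -> ex_RInt f a b) ->
  (is_int_to_inf f a I <-> tends_at_infty (RInt f a) I).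
Proof.
  intros Hi. split.
  - intros H eps He. destruct (H eps He) as [B HB]. exists B. intros b Hb.
    destruct (HB b Hb) as [pr Hpr]. rewrite (RInt_Reals f a b pr). exact Hpr.
  - intros HL eps He. destruct (HL eps He) as [B HB].
    exists (Rmax a B). intros b Hb.
    assert (ha : a <= b) by (eapply Rle_trans; [apply Rmax_l|exact Hb]).
    exists (ex_RInt_Reals_0 f a b (Hi b ha)).
    rewrite <- RInt_Reals. apply HB. eapply Rle_trans; [apply Rmax_r|exact Hb].
Qed.

Lemma is_int_from_minf_tends f a I :
  (forall b, b <= a -> ex_RInt f b a) ->
  (is_int_from_minf f a I <-> tends_at_infty (fun c => RInt f (- c) a) I).
Proof.
  intros Hi. split.
  - intros H eps He. destruct (H eps He) as [B HB]. exists (- B). intros c Hc.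
    destruct (HB (- c) ltac:(lra)) as [pr Hpr]. rewrite (RInt_Reals f (- c) a pr). exact Hpr.
  - intros HL eps He. destruct (HL eps He) as [B HB].
    exists (Rmin a (- B)). intros b Hb.
    assert (ha : b <= a) by (eapply Rle_trans; [exact Hb|apply Rmin_l]).
    exists (ex_RInt_Reals_0 f b a (Hi b ha)).
    rewrite <- RInt_Reals. replace b with (- - b) by ring. apply HB.
    assert (b <= - B) by (eapply Rle_trans; [exact Hb|apply Rmin_r]). lra.
Qed.

Lemma int_to_inf_eq f a I : (forall b, a <= b -> ex_RInt f a b) ->
  tends_at_infty (RInt f a) I -> int_to_inf f a = I.
Proof.
  intros Hi HL. unfold int_to_inf.
  assert (Hs : is_int_to_inf f a (epsilon (inhabits 0) (fun J => is_int_to_inf f a J))).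
  { apply epsilon_spec. exists I. apply is_int_to_inf_tends; auto. }
  apply is_int_to_inf_tends in Hs; [|exact Hi].
  exact (tends_at_infty_unique _ _ _ Hs HL).
Qed.

Lemma int_from_minf_eq f a I : (forall b, b <= a -> ex_RInt f b a) ->
  tends_at_infty (fun c => RInt f (- c) a) I -> int_from_minf f a = I.
Proof.
  intros Hi HL. unfold int_from_minf.
  assert (Hs : is_int_from_minf f a (epsilon (inhabits 0) (fun J => is_int_from_minf f a J))).
  { apply epsilon_spec. exists I. apply is_int_from_minf_tends; auto. }
  apply is_int_from_minf_tends in Hs; [|exact Hi].
  exact (tends_at_infty_unique _ _ _ Hs HL).
Qed.

Lemma continuous_of_ex_derive (f : R -> R) x : ex_derive f x -> continuous f x.
Proof. intro H. exact (@ex_derive_continuous R_AbsRing R_NormedModule f x H). Qed.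

Lemma ex_RInt_of_continuous (f : R -> R) a b :
  (forall x, Rmin a b <= x <= Rmax a b -> continuous f x) -> ex_RInt f a b.
Proof. intro H. exact (@ex_RInt_continuous R_CompleteNormedModule f a b H). Qed.

Lemma ex_RInt_lin (f g : R -> R) u c d : ex_RInt f c d -> ex_RInt g c d ->
  ex_RInt (fun x => f x + u * g x) c d.
Proof.
  intros Hf Hg.
  apply (@ex_RInt_plus R_NormedModule f (fun x => scal u (g x)) c d Hf).
  apply (@ex_RInt_scal R_NormedModule). exact Hg.
Qed.

Lemma RInt_scal_R (f : R -> R) u c d : ex_RInt f c d ->
  RInt (fun x => u * f x) c d = u * RInt f c d.
Proof. intro H. exact (@RInt_scal R_CompleteNormedModule f c d u H). Qed.

Lemma RInt_lin (f g : R -> R) u c d : ex_RInt f c d -> ex_RInt g c d ->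
  RInt (fun x => f x + u * g x) c d = RInt f c d + u * RInt g c d.
Proof.
  intros Hf Hg.
  assert (Hg' : ex_RInt (V := R_NormedModule) (fun x => scal u (g x)) c d)
    by (apply (@ex_RInt_scal R_NormedModule); exact Hg).
  transitivity (RInt f c d + RInt (fun x => u * g x) c d).
  - exact (@RInt_plus R_CompleteNormedModule f (fun x => scal u (g x)) c d Hf Hg').
  - rewrite (RInt_scal_R g u c d Hg). reflexivity.
Qed.

Lemma nondecreasing_from_deriv (f df : R -> R) :
  (forall x, 0 <= x -> is_derive f x (df x)) -> (forall x, 0 <= x -> 0 <= df x) ->
  forall x, 0 <= x -> f 0 <= f x.
Proof.
  intros Hd Hp x Hx.
  destruct (Req_dec x 0) as [->|hx]; [lra|].
  destruct (MVT_gen f 0 x df) as [c [Hc Heq]].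
  - intros y Hy. apply Hd. rewrite Rmin_left in Hy; lra.
  - intros y Hy. apply continuity_pt_filterlim, continuous_of_ex_derive.
    exists (df y). apply Hd. rewrite Rmin_left in Hy; lra.
  - rewrite Rmin_left in Hc by lra. rewrite Rmax_right in Hc by lra.
    assert (0 <= df c) by (apply Hp; lra).
    assert (0 <= df c * (x - 0)) by (apply Rmult_le_pos; lra). lra.
Qed.

Lemma RInt_exp_decay C k c d : 0 < k ->
  RInt (fun x => C * exp (- k * x)) c d = C / k * (exp (- k * c) - exp (- k * d)).
Proof.
  intros Hk.
  assert (H := is_RInt_derive (fun x => - (C / k) * exp (- k * x))
                 (fun x => C * exp (- k * x)) c d).
  apply is_RInt_unique in H.
  - rewrite H. unfold minus, plus, opp; simpl. field. lra.
  - intros x _. auto_derive; auto. field. lra.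
  - intros x _. apply continuous_of_ex_derive. auto_derive. auto.
Qed.

Lemma exp_decay_small k C eps : 0 < k -> 0 <= C -> 0 < eps -> forall a0,
  exists b, a0 <= b /\ 0 <= b /\ forall c, b <= c -> C / k * exp (- k * c) < eps.
Proof.
  intros Hk HC He a0.
  set (b := Rmax (Rmax a0 0) ((C + 1) / (eps * k * k))).
  exists b. split; [unfold b; eapply Rle_trans; [apply Rmax_l|apply Rmax_l]|].
  split; [unfold b; eapply Rle_trans; [apply Rmax_r|apply Rmax_l]|].
  intros c Hc.
  assert (Hb : (C + 1) / (eps * k * k) <= c) by (eapply Rle_trans; [apply Rmax_r|exact Hc]).
  assert (Hkc : (C + 1) / (eps * k) <= k * c).
  { apply (Rmult_le_compat_l k) in Hb; [|lra].
    replace (k * ((C + 1) / (eps * k * k))) with ((C + 1) / (eps * k)) in Hb by (field; lra).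
    exact Hb. }
  assert (He1 := exp_ineq1_le (k * c)).
  assert (Hpos : 0 < exp (k * c)) by apply exp_pos.
  replace (- k * c) with (- (k * c)) by ring. rewrite exp_Ropp.
  assert (Hgt : (C + 1) / (eps * k) < exp (k * c)) by lra.
  apply (Rmult_lt_reg_r (exp (k * c) * k)); [apply Rmult_lt_0_compat; lra|].
  replace (C / k * / exp (k * c) * (exp (k * c) * k)) with C by (field; lra).
  apply (Rmult_lt_compat_l (eps * k)) in Hgt; [|apply Rmult_lt_0_compat; lra].
  replace (eps * k * ((C + 1) / (eps * k))) with (C + 1) in Hgt by (field; lra).
  nra.
Qed.

Section DominatedIntegral.
Variables (f : R -> R) (a0 C k : R).
Hypotheses (Ha0 : 0 <= a0) (Hk : 0 < k) (HC : 0 <= C).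
Hypothesis f_cont : forall x, 0 <= x -> continuous f x.
Hypothesis f_nonneg : forall x, 0 <= x -> 0 <= f x.
Hypothesis f_dom : forall x, a0 <= x -> f x <= C * exp (- k * x).

Let f_int c d : 0 <= c -> 0 <= d -> ex_RInt f c d.
Proof.
  intros Hc Hd. apply ex_RInt_of_continuous. intros x Hx. apply f_cont.
  assert (0 <= Rmin c d) by (apply Rmin_glb; lra). lra.
Qed.

Let partial_integral_bound c c' : a0 <= c -> 0 <= c' ->
  RInt f 0 c' <= RInt f 0 c + C / k * exp (- k * c).
Proof.
  intros Hc Hc'.
  assert (Htail : 0 <= C / k * exp (- k * c))
    by (apply Rmult_le_pos; [apply Rdiv_le_0_compat; lra|left; apply exp_pos]).
  rewrite <- (RInt_Chasles f 0 c c' (f_int 0 c ltac:(lra) ltac:(lra))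
                (f_int c c' ltac:(lra) ltac:(lra))).
  unfold plus; simpl.
  destruct (Rle_dec c c') as [Hcc|Hcc].
  - assert (RInt f c c' <= RInt (fun x => C * exp (- k * x)) c c').
    { apply RInt_le; [lra|apply f_int; lra| |intros; apply f_dom; lra].
      apply ex_RInt_of_continuous. intros. apply continuous_of_ex_derive. auto_derive. auto. }
    rewrite RInt_exp_decay in H by lra.
    assert (0 <= C / k * exp (- k * c'))
      by (apply Rmult_le_pos; [apply Rdiv_le_0_compat; lra|left; apply exp_pos]).
    lra.
  - assert (0 <= RInt f c' c) by (apply RInt_ge_0; [lra|apply f_int; lra|intros; apply f_nonneg; lra]).
    rewrite <- (opp_RInt_swap f c' c (f_int c' c ltac:(lra) ltac:(lra))).
    unfold opp; simpl. lra.
Qed.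

Lemma dominated_int_to_inf :
  tends_at_infty (RInt f 0) (int_to_inf f 0)
  /\ (forall c, 0 <= c -> RInt f 0 c <= int_to_inf f 0)
  /\ (forall c, a0 <= c -> int_to_inf f 0 <= RInt f 0 c + C / k * exp (- k * c)).
Proof.
  set (E := fun y => exists c, 0 <= c /\ y = RInt f 0 c).
  destruct (completeness E) as [I [HI1 HI2]].
  { exists (RInt f 0 a0 + C / k * exp (- k * a0)).
    intros y [c [Hc0 ->]]. apply partial_integral_bound; lra. }
  { exists (RInt f 0 0). exists 0. split; lra. }
  assert (Hle : forall c, 0 <= c -> RInt f 0 c <= I)
    by (intros c Hc0; apply HI1; exists c; split; auto).
  assert (Hge : forall c, a0 <= c -> I <= RInt f 0 c + C / k * exp (- k * c)).
  { intros c Hc0. apply HI2. intros y [c' [Hc' ->]]. apply partial_integral_bound; auto. }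
  assert (HL : tends_at_infty (RInt f 0) I).
  { intros eps He. destruct (exp_decay_small k C eps Hk HC He a0) as [b [Hb1 [Hb2 Hb3]]].
    exists b. intros c Hcb.
    assert (h1 := Hle c ltac:(lra)). assert (h2 := Hge c ltac:(lra)).
    assert (h3 := Hb3 c Hcb).
    rewrite Rabs_left1 by lra. lra. }
  rewrite (int_to_inf_eq f 0 I); [auto| |exact HL].
  intros b Hb. apply f_int; lra.
Qed.

End DominatedIntegral.

Lemma exp_le x y : x <= y -> exp x <= exp y.
Proof. intro H. destruct (Req_dec x y) as [->|h]; [lra|left; apply exp_increasing; lra]. Qed.

(* Convexity of [exp]: the chord lies below the tangent at the right end. *)
Lemma exp_diff_le X Y : exp X - exp Y <= (X - Y) * exp X.
Proof.
  assert (H := exp_ineq1_le (Y - X)).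
  replace (exp Y) with (exp X * exp (Y - X)) by (rewrite <- exp_plus; f_equal; ring).
  assert (0 < exp X) by apply exp_pos.
  assert (exp X * (1 + (Y - X)) <= exp X * exp (Y - X)) by (apply Rmult_le_compat_l; lra).
  lra.
Qed.

Lemma exp_diff_abs x y : Rabs (exp x - exp y) <= Rabs (x - y) * exp (y + Rabs (x - y)).
Proof.
  destruct (Rle_dec y x) as [h|h].
  - rewrite (Rabs_pos_eq (x - y)) by lra.
    assert (exp y <= exp x) by (apply exp_le; lra).
    rewrite Rabs_pos_eq by lra. replace (y + (x - y)) with x by ring. apply exp_diff_le.
  - rewrite (Rabs_left1 (x - y)) by lra.
    assert (H := exp_diff_le y x).
    assert (exp x <= exp y) by (apply exp_le; lra).
    rewrite Rabs_left1 by lra.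
    assert (exp y <= exp (y + - (x - y))) by (apply exp_le; lra).
    assert ((y - x) * exp y <= (y - x) * exp (y + - (x - y))) by (apply Rmult_le_compat_l; lra).
    lra.
Qed.

Lemma mul_exp_neg_le s : 0 <= s -> s * exp (- s) <= 2 * exp (- (1 / 2) * s).
Proof.
  intro Hs. assert (H := exp_ineq1_le (s / 2)).
  replace (exp (- s)) with (exp (- (1 / 2) * s) * exp (- (1 / 2) * s))
    by (rewrite <- exp_plus; f_equal; field).
  replace (exp (- (1 / 2) * s)) with (/ exp (s / 2)) by (rewrite <- exp_Ropp; f_equal; field).
  assert (Hy : 0 < exp (s / 2)) by apply exp_pos.
  set (y := exp (s / 2)) in *. clearbody y.
  replace (s * (/ y * / y)) with ((s / y) * / y) by (field; lra).
  apply Rmult_le_compat_r; [left; apply Rinv_0_lt_compat; lra|].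
  apply (Rmult_le_reg_r y); [lra|]. replace (s / y * y) with s by (field; lra). lra.
Qed.

Lemma ln_le_tangent y k : 0 < y -> 0 < k -> ln y <= y / k + ln k - 1.
Proof.
  intros Hy Hk.
  assert (Hik : 0 < / k) by (apply Rinv_0_lt_compat; lra).
  assert (H := exp_ineq1_le (ln (y * / k))).
  rewrite exp_ln in H by (apply Rmult_lt_0_compat; lra).
  rewrite (ln_mult y (/ k) Hy Hik), (ln_Rinv k Hk) in H. unfold Rdiv. lra.
Qed.

Lemma ln1p_le x : 0 <= x -> ln (1 + x) <= x.
Proof.
  intro Hx.
  assert (H := nondecreasing_from_deriv (fun x => x - ln (1 + x)) (fun x => 1 - / (1 + x))).
  simpl in H. rewrite Rplus_0_r, ln_1 in H.
  enough (0 - 0 <= x - ln (1 + x)) by lra.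
  apply H; auto.
  - intros y Hy. auto_derive; [lra|]. field; lra.
  - intros y Hy. assert (/ (1 + y) <= 1); [|lra].
    rewrite <- Rinv_1. apply Rinv_le_contravar; lra.
Qed.

Lemma ln1p_ge_order2 x : 0 <= x -> x - x * x / 2 <= ln (1 + x).
Proof.
  intro Hx.
  assert (H := nondecreasing_from_deriv (fun x => ln (1 + x) - (x - x * x / 2))
                 (fun x => x * x / (1 + x))).
  simpl in H. rewrite Rplus_0_r, ln_1 in H.
  enough (0 - (0 - 0 * 0 / 2) <= ln (1 + x) - (x - x * x / 2)) by lra.
  apply H; auto.
  - intros y Hy. auto_derive; [lra|]. field; lra.
  - intros y Hy. apply Rdiv_le_0_compat; nra.
Qed.

Lemma ln1p_le_order3 x : 0 <= x -> ln (1 + x) <= x - x * x / 2 + x * x * x / 3.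
Proof.
  intro Hx.
  assert (H := nondecreasing_from_deriv (fun x => x - x * x / 2 + x * x * x / 3 - ln (1 + x))
                 (fun x => x * x * x / (1 + x))).
  simpl in H. rewrite Rplus_0_r, ln_1 in H.
  enough (0 - 0 * 0 / 2 + 0 * 0 * 0 / 3 - 0 <= x - x * x / 2 + x * x * x / 3 - ln (1 + x))
    by lra.
  apply H; auto.
  - intros y Hy. auto_derive; [lra|]. field; lra.
  - intros y Hy. apply Rdiv_le_0_compat; [|lra]. repeat apply Rmult_le_pos; lra.
Qed.

Lemma ln1p_le_rational x : 0 <= x -> ln (1 + x) <= x - x * x / (2 * (1 + x)).
Proof.
  intro Hx.
  assert (H := nondecreasing_from_deriv (fun x => x - x * x / (2 * (1 + x)) - ln (1 + x))
                 (fun x => x * x / (2 * ((1 + x) * (1 + x))))).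
  simpl in H. rewrite Rplus_0_r, ln_1 in H.
  enough (0 - 0 * 0 / (2 * 1) - 0 <= x - x * x / (2 * (1 + x)) - ln (1 + x)) by lra.
  apply H; auto.
  - intros y Hy. auto_derive; [lra|]. field; lra.
  - intros y Hy. apply Rdiv_le_0_compat; nra.
Qed.

(* Bounds for [h u = (1 + u) ln (1 + u) - u], the function behind the
   parameter [a] of the upper bound [UB]. *)

Lemma h_nonneg u : 0 <= u -> 0 <= (1 + u) * ln (1 + u) - u.
Proof.
  intro Hu.
  assert (H := nondecreasing_from_deriv (fun u => (1 + u) * ln (1 + u) - u)
                 (fun u => ln (1 + u))).
  simpl in H. rewrite Rplus_0_r, ln_1 in H.
  enough (1 * 0 - 0 <= (1 + u) * ln (1 + u) - u) by lra.
  apply H; auto.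
  - intros y Hy. auto_derive; [lra|]. field; lra.
  - intros y Hy. rewrite <- ln_1. destruct (Req_dec y 0) as [->|h]; [rewrite Rplus_0_r; lra|].
    left; apply ln_increasing; lra.
Qed.

Lemma h_le_order2 u : 0 <= u -> (1 + u) * ln (1 + u) - u <= u * u / 2.
Proof.
  intro Hu.
  assert (H := nondecreasing_from_deriv (fun u => u * u / 2 - ((1 + u) * ln (1 + u) - u))
                 (fun u => u - ln (1 + u))).
  simpl in H. rewrite Rplus_0_r, ln_1 in H.
  enough (0 * 0 / 2 - (1 * 0 - 0) <= u * u / 2 - ((1 + u) * ln (1 + u) - u)) by lra.
  apply H; auto.
  - intros y Hy. auto_derive; [lra|]. field; lra.
  - intros y Hy. assert (ln (1 + y) <= y) by (apply ln1p_le; lra). lra.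
Qed.

Lemma h_ge_order3 u : 0 <= u -> u * u / 2 - u * u * u / 6 <= (1 + u) * ln (1 + u) - u.
Proof.
  intro Hu.
  assert (H := nondecreasing_from_deriv
                 (fun u => ((1 + u) * ln (1 + u) - u) - (u * u / 2 - u * u * u / 6))
                 (fun u => ln (1 + u) - (u - u * u / 2))).
  simpl in H. rewrite Rplus_0_r, ln_1 in H.
  enough ((1 * 0 - 0) - (0 * 0 / 2 - 0 * 0 * 0 / 6)
          <= ((1 + u) * ln (1 + u) - u) - (u * u / 2 - u * u * u / 6)) by lra.
  apply H; auto.
  - intros y Hy. auto_derive; [lra|]. field; lra.
  - intros y Hy. assert (y - y * y / 2 <= ln (1 + y)) by (apply ln1p_ge_order2; lra). lra.
Qed.

(** Gaussian integrals.  [Mg a = int_0^oo exp (a s - s^2/2) ds] and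
    [Ng b = int_0^oo s exp (b s - s^2/2) ds]; both the Erlang integral and the
    bound [UB] will be compared with [Ng]. *)

Definition mgauss (a s : R) : R := exp (a * s - s * s / 2).
Definition ngauss (b s : R) : R := s * exp (b * s - s * s / 2).
Definition Mg (a : R) : R := int_to_inf (mgauss a) 0.
Definition Ng (b : R) : R := int_to_inf (ngauss b) 0.

Lemma mgauss_cont a x : continuous (mgauss a) x.
Proof. apply continuous_of_ex_derive. unfold mgauss. auto_derive. auto. Qed.

Lemma ngauss_cont b x : continuous (ngauss b) x.
Proof. apply continuous_of_ex_derive. unfold ngauss. auto_derive. auto. Qed.

Lemma ex_RInt_mgauss a c d : ex_RInt (mgauss a) c d.
Proof. apply ex_RInt_of_continuous. intros; apply mgauss_cont. Qed.

Lemma ex_RInt_ngauss b c d : ex_RInt (ngauss b) c d.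
Proof. apply ex_RInt_of_continuous. intros; apply ngauss_cont. Qed.

Lemma mgauss_dom a s : mgauss a s <= exp ((a + 1) * (a + 1) / 2) * exp (- (1) * s).
Proof.
  unfold mgauss. rewrite <- exp_plus. apply exp_le.
  assert (0 <= (s - (a + 1)) * (s - (a + 1))) by apply Rle_0_sqr. lra.
Qed.

Lemma ngauss_dom b s : 0 <= s -> ngauss b s <= exp ((b + 2) * (b + 2) / 2) * exp (- (1) * s).
Proof.
  intro Hs. unfold ngauss.
  assert (s <= exp s) by (assert (H := exp_ineq1_le s); lra).
  apply Rle_trans with (exp s * exp (b * s - s * s / 2)).
  { apply Rmult_le_compat_r; [left; apply exp_pos|auto]. }
  rewrite <- !exp_plus. apply exp_le.
  assert (0 <= (s - (b + 2)) * (s - (b + 2))) by apply Rle_0_sqr. lra.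
Qed.

Lemma Mg_limit a :
  tends_at_infty (RInt (mgauss a) 0) (Mg a) /\ (forall c, 0 <= c -> RInt (mgauss a) 0 c <= Mg a).
Proof.
  destruct (dominated_int_to_inf (mgauss a) 0 (exp ((a + 1) * (a + 1) / 2)) 1)
    as [H1 [H2 _]]; auto; try lra.
  - left; apply exp_pos.
  - intros; apply mgauss_cont.
  - intros; unfold mgauss; left; apply exp_pos.
  - intros; apply mgauss_dom.
Qed.

Lemma Ng_limit b :
  tends_at_infty (RInt (ngauss b) 0) (Ng b) /\ (forall c, 0 <= c -> RInt (ngauss b) 0 c <= Ng b).
Proof.
  destruct (dominated_int_to_inf (ngauss b) 0 (exp ((b + 2) * (b + 2) / 2)) 1)
    as [H1 [H2 _]]; auto; try lra.
  - left; apply exp_pos.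
  - intros; apply ngauss_cont.
  - intros; unfold ngauss; apply Rmult_le_pos; [lra|left; apply exp_pos].
  - intros; apply ngauss_dom; lra.
Qed.

Lemma Ng_tail b K T : 0 <= b <= K -> 2 * (K + 1) <= T ->
  Ng b <= RInt (ngauss b) 0 T + 4 * exp (- (1 / 2) * T).
Proof.
  intros Hb HT.
  destruct (dominated_int_to_inf (ngauss b) (2 * (K + 1)) 2 (1 / 2)) as [_ [_ H3]]; try lra.
  - intros; apply ngauss_cont.
  - intros; unfold ngauss; apply Rmult_le_pos; [lra|left; apply exp_pos].
  - intros s Hs. unfold ngauss. apply Rle_trans with (s * exp (- s)).
    + apply Rmult_le_compat_l; [lra|]. apply exp_le. nra.
    + apply mul_exp_neg_le; lra.
  - specialize (H3 T HT). replace (2 / (1 / 2)) with 4 in H3 by field. exact H3.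
Qed.

Lemma Ng_nonneg b : 0 <= Ng b.
Proof.
  destruct (Ng_limit b) as [_ H]. specialize (H 0 (Rle_refl 0)).
  rewrite RInt_point in H. exact H.
Qed.

Lemma Mg_mono a a' : a <= a' -> Mg a <= Mg a'.
Proof.
  intro H. destruct (Mg_limit a) as [H1 _]. destruct (Mg_limit a') as [H2 _].
  rewrite <- (Rplus_0_r (Mg a')). apply (tends_at_infty_le _ _ _ _ 0 H1 H2).
  exists 0. intros c Hc. rewrite Rplus_0_r.
  apply RInt_le; auto; try apply ex_RInt_mgauss.
  intros x Hx. unfold mgauss. apply exp_le.
  assert (a * x <= a' * x) by (apply Rmult_le_compat_r; lra). lra.
Qed.

Lemma Ng_mono b b' : b <= b' -> Ng b <= Ng b'.
Proof.
  intro H. destruct (Ng_limit b) as [H1 _]. destruct (Ng_limit b') as [H2 _].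
  rewrite <- (Rplus_0_r (Ng b')). apply (tends_at_infty_le _ _ _ _ 0 H1 H2).
  exists 0. intros c Hc. rewrite Rplus_0_r.
  apply RInt_le; auto; try apply ex_RInt_ngauss.
  intros x Hx. unfold ngauss. apply Rmult_le_compat_l; [lra|]. apply exp_le.
  assert (b * x <= b' * x) by (apply Rmult_le_compat_r; lra). lra.
Qed.

Lemma Mg_increment a b : a <= b -> Mg b <= Mg a + (b - a) * Ng b.
Proof.
  intro H. destruct (Mg_limit a) as [H1 _]. destruct (Mg_limit b) as [H2 _].
  destruct (Ng_limit b) as [H3 _].
  assert (H4 : tends_at_infty (fun c => RInt (mgauss a) 0 c + (b - a) * RInt (ngauss b) 0 c)
                 (Mg a + (b - a) * Ng b)).
  { apply (tends_at_infty_plus _ (fun c => (b - a) * RInt (ngauss b) 0 c)); auto.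
    apply (tends_at_infty_affine _ _ 0 (b - a)) in H3.
    rewrite Rplus_0_l in H3. revert H3. apply tends_at_infty_ext. intro. ring. }
  rewrite <- (Rplus_0_r (Mg a + (b - a) * Ng b)).
  apply (tends_at_infty_le _ _ _ _ 0 H2 H4).
  exists 0. intros c Hc. rewrite Rplus_0_r.
  rewrite <- (RInt_lin (mgauss a) (ngauss b) (b - a) 0 c
                (ex_RInt_mgauss _ _ _) (ex_RInt_ngauss _ _ _)).
  apply RInt_le; [lra|apply ex_RInt_mgauss|apply ex_RInt_lin; [apply ex_RInt_mgauss|apply ex_RInt_ngauss]|].
  intros x Hx. unfold mgauss, ngauss.
  assert (Hd := exp_diff_le (b * x - x * x / 2) (a * x - x * x / 2)).
  replace (b * x - x * x / 2 - (a * x - x * x / 2)) with ((b - a) * x) in Hd by ring. lra.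
Qed.

(* A lower bound: [Mg 0 >= int_0^1 exp (- 1/2) >= 1/2]. *)
Lemma Mg0_ge_half : 1 / 2 <= Mg 0.
Proof.
  destruct (Mg_limit 0) as [_ H]. eapply Rle_trans; [|apply (H 1); lra].
  apply Rle_trans with (RInt (fun _ => exp (- 1 / 2)) 0 1).
  - rewrite RInt_const. unfold scal; simpl; unfold mult; simpl.
    assert (h := exp_ineq1_le (- 1 / 2)). lra.
  - apply RInt_le; [lra|apply ex_RInt_const|apply ex_RInt_mgauss|].
    intros x Hx. unfold mgauss. apply exp_le.
    assert (x * x <= 1 * 1) by (apply Rmult_le_compat; lra). lra.
Qed.

(* Integration by parts: [s e^(bs - s^2/2) = b e^(bs - s^2/2) - (e^(bs - s^2/2))']. *)
Lemma ngauss_partial b c :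
  RInt (ngauss b) 0 c = 1 - exp (b * c - c * c / 2) + b * RInt (mgauss b) 0 c.
Proof.
  assert (Hd := @is_RInt_derive R_CompleteNormedModule (fun x => - exp (b * x - x * x / 2))
                  (fun x => (x - b) * exp (b * x - x * x / 2)) 0 c).
  assert (Hex : ex_RInt (fun x => (x - b) * exp (b * x - x * x / 2)) 0 c).
  { apply ex_RInt_of_continuous. intros. apply continuous_of_ex_derive. auto_derive. auto. }
  assert (E1 : RInt (fun x => (x - b) * exp (b * x - x * x / 2)) 0 c
               = 1 - exp (b * c - c * c / 2)).
  { apply is_RInt_unique in Hd.
    - rewrite Hd. unfold minus, plus, opp; simpl.
      replace (b * 0 - 0 * 0 / 2) with 0 by field. rewrite exp_0. ring.
    - intros x _. auto_derive; auto.
      match goal with |- ?u = ?v => change (@eq R u v) end. unfold Rminus, Rdiv. field.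
    - intros x _. apply continuous_of_ex_derive. auto_derive. auto. }
  rewrite <- E1, <- (RInt_lin _ (mgauss b) b 0 c Hex (ex_RInt_mgauss _ _ _)).
  apply RInt_ext. intros x _. unfold ngauss, mgauss.
  match goal with |- ?u = ?v => change (@eq R u v) end. ring.
Qed.

Lemma Ng_eq b : Ng b = 1 + b * Mg b.
Proof.
  destruct (Ng_limit b) as [HN _]. destruct (Mg_limit b) as [HM _].
  apply (tends_at_infty_affine _ _ 1 b) in HM.
  apply (tends_at_infty_unique (RInt (ngauss b) 0)); auto.
  apply (tends_at_infty_approx _ _ _ HM).
  intros eps He.
  destruct (exp_decay_small 1 (exp ((b + 1) * (b + 1) / 2)) eps ltac:(lra)
              ltac:(left; apply exp_pos) He 0) as [B [HB1 [HB2 HB3]]].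
  exists B. intros c Hc. rewrite ngauss_partial.
  replace (1 - exp (b * c - c * c / 2) + b * RInt (mgauss b) 0 c - (1 + b * RInt (mgauss b) 0 c))
    with (- exp (b * c - c * c / 2)) by ring.
  rewrite Rabs_Ropp, Rabs_pos_eq by (left; apply exp_pos).
  assert (h := mgauss_dom b c). unfold mgauss in h. specialize (HB3 c Hc).
  rewrite Rdiv_1_r in HB3. lra.
Qed.

Lemma phi_pos a : 0 < phi a.
Proof.
  unfold phi. apply Rdiv_lt_0_compat; [apply exp_pos|]. apply sqrt_lt_R0.
  assert (H := PI_RGT_0). lra.
Qed.

Lemma phi_cont x : continuous phi x.
Proof. apply continuous_of_ex_derive. unfold phi. auto_derive. exact I. Qed.

(* Substituting [x = a - s]: [phi (a - s) = phi a * exp (a s - s^2/2)]. *)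
Lemma phi_partial a b : RInt phi b a = phi a * RInt (mgauss a) 0 (a - b).
Proof.
  assert (Hex : ex_RInt phi (-1 * 0 + a) (-1 * (a - b) + a))
    by (apply ex_RInt_of_continuous; intros; apply phi_cont).
  assert (E := @RInt_comp_lin R_CompleteNormedModule phi (-1) a 0 (a - b) Hex).
  replace (-1 * 0 + a) with a in E by ring. replace (-1 * (a - b) + a) with b in E by ring.
  assert (Hex2 : ex_RInt phi b a) by (apply ex_RInt_of_continuous; intros; apply phi_cont).
  rewrite <- (@opp_RInt_swap R_CompleteNormedModule phi b a Hex2) in E.
  match type of E with ?L = _ => assert (E3 : L = -1 * (phi a * RInt (mgauss a) 0 (a - b))) end.
  { transitivity (RInt (fun y => -1 * (phi a * mgauss a y)) 0 (a - b)).
    - apply RInt_ext. intros x _. unfold scal; simpl; unfold mult; simpl. unfold phi, mgauss.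
      replace (- ((-1 * x + a) * (-1 * x + a)) / 2)
        with (- (a * a) / 2 + (a * x - x * x / 2)) by field.
      rewrite exp_plus. field. apply Rgt_not_eq, sqrt_lt_R0. assert (H := PI_RGT_0). lra.
    - rewrite (RInt_scal_R (fun y => phi a * mgauss a y) (-1) 0 (a - b)).
      + rewrite (RInt_scal_R (mgauss a) (phi a) 0 (a - b) (ex_RInt_mgauss _ _ _)). reflexivity.
      + apply ex_RInt_of_continuous. intros. apply continuous_of_ex_derive.
        unfold mgauss. auto_derive. auto. }
  assert (E4 := eq_trans (eq_sym E) E3). unfold opp in E4; simpl in E4. lra.
Qed.

(* Letting [b -> -oo] in [phi_partial]. *)
Lemma Phi_eq a : Phi a = phi a * Mg a.
Proof.
  apply int_from_minf_eq.
  - intros b Hb. apply ex_RInt_of_continuous; intros; apply phi_cont.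
  - destruct (Mg_limit a) as [HM _].
    apply (tends_at_infty_affine _ _ 0 (phi a)), (tends_at_infty_shift _ _ a) in HM.
    rewrite Rplus_0_l in HM. revert HM. apply tends_at_infty_ext. intro c.
    rewrite phi_partial, Rplus_0_l. replace (a - - c) with (a + c) by ring. reflexivity.
Qed.

(** The Erlang integral after the scaling [lambda = w^2], [t = s / w].
    With [n = w^2 + b w] servers, [alpha_tilde b (w^2) = min 1 (1 / A w b)] where
    [A w b = int_0^oo s exp (E w b s) ds] (Lemma [alpha_tilde_eq]). *)

Definition erlang_n (w b : R) : R := w * w + b * w.
Definition erlang_exponent (w b s : R) : R := (erlang_n w b - 1) * ln (1 + s / w) - w * s.
Definition erlang_integrand (w b s : R) : R := s * exp (erlang_exponent w b s).
Definition erlang_A (w b : R) : R := int_to_inf (erlang_integrand w b) 0.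

Lemma erlang_exponent_near_gauss w b s : 1 <= w -> 0 <= b -> 0 <= s ->
  Rabs (erlang_exponent w b s - (b * s - s * s / 2))
  <= (1 + b) * (s + s * s + s * s * s) / w.
Proof.
  intros Hw Hb Hs.
  set (x := s / w).
  assert (Hx : 0 <= x) by (unfold x; apply Rdiv_le_0_compat; lra).
  assert (Hsx : s = w * x) by (unfold x; field; lra).
  assert (L1 := ln1p_ge_order2 x Hx). assert (L2 := ln1p_le_order3 x Hx).
  set (r := ln (1 + x) - (x - x * x / 2)).
  assert (Hr0 : 0 <= r) by (unfold r; lra).
  assert (Hr1 : r <= x * x * x / 3) by (unfold r; lra).
  assert (Hdiff : erlang_exponent w b s - (b * s - s * s / 2)
                  = - x - b * w * x * x / 2 + x * x / 2 + (erlang_n w b - 1) * r).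
  { unfold erlang_exponent. fold x. replace (ln (1 + x)) with (x - x * x / 2 + r) by (unfold r; ring).
    rewrite Hsx. unfold erlang_n. field. }
  assert (Hrhs : (1 + b) * (s + s * s + s * s * s) / w
                 = (1 + b) * (x + w * x * x + w * w * x * x * x)).
  { rewrite Hsx. field. lra. }
  rewrite Hdiff, Hrhs. clearbody x r. unfold erlang_n.
  assert (Hn1 : 0 <= w * w + b * w - 1) by nra.
  assert (P1 : 0 <= (w * w + b * w - 1) * r) by (apply Rmult_le_pos; lra).
  assert (P2 : (w * w + b * w - 1) * r <= (w * w + b * w) * (x * x * x / 3)).
  { apply Rle_trans with ((w * w + b * w) * r); [nra|]. apply Rmult_le_compat_l; nra. }
  assert (Hx2 : 0 <= x * x) by nra. assert (Hx3 : 0 <= x * x * x) by nra.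
  assert (Hbw : 0 <= b * w) by nra.
  assert (0 <= b * x) by nra. assert (0 <= b * w * x * x) by (repeat apply Rmult_le_pos; lra).
  apply Rabs_le. split.
  - assert (b * w * x * x <= (1 + b) * w * x * x) by nra.
    assert (0 <= (1 + b) * w * w * x * x * x) by (repeat apply Rmult_le_pos; lra). lra.
  - assert (x * x / 2 <= w * x * x) by nra.
    assert ((w * w + b * w) * (x * x * x / 3) <= (1 + b) * (w * w * x * x * x)).
    { assert (b * w <= b * w * w) by nra. nra. }
    lra.
Qed.

Lemma erlang_integrand_cont w b s : 0 < w -> 0 <= s -> continuous (erlang_integrand w b) s.
Proof.
  intros Hw Hs. apply continuous_of_ex_derive. unfold erlang_integrand, erlang_exponent.
  auto_derive. assert (0 <= s / w) by (apply Rdiv_le_0_compat; lra). unfold Rdiv in *. lra.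
Qed.

Lemma erlang_integrand_nonneg w b s : 0 <= s -> 0 <= erlang_integrand w b s.
Proof. intro Hs. unfold erlang_integrand. apply Rmult_le_pos; [lra|left; apply exp_pos]. Qed.

Lemma ex_RInt_erlang w b c d : 0 < w -> 0 <= c -> 0 <= d -> ex_RInt (erlang_integrand w b) c d.
Proof.
  intros Hw Hc Hd. apply ex_RInt_of_continuous. intros x Hx. apply erlang_integrand_cont; auto.
  assert (0 <= Rmin c d) by (apply Rmin_glb; lra). lra.
Qed.

Lemma erlang_integrand_dom w b s : 4 <= w -> 0 <= b -> 0 <= s ->
  erlang_integrand w b s
  <= exp (w * w / 2 + (erlang_n w b - 1) * (ln (2 * (erlang_n w b - 1) / (w * w)) - 1))
     * exp (- (1) * s).
Proof.
  intros Hw Hb Hs.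
  set (k := 2 * (erlang_n w b - 1) / (w * w)).
  assert (Hn : 1 < erlang_n w b) by (unfold erlang_n; nra).
  assert (Hk : 0 < k) by (unfold k; apply Rdiv_lt_0_compat; nra).
  assert (Hx : 0 <= s / w) by (apply Rdiv_le_0_compat; lra).
  assert (HE : erlang_exponent w b s <= w * w / 2 + (erlang_n w b - 1) * (ln k - 1) - w * s / 2).
  { assert (L := ln_le_tangent (1 + s / w) k ltac:(lra) Hk).
    assert (L2 : (erlang_n w b - 1) * ln (1 + s / w)
                 <= (erlang_n w b - 1) * ((1 + s / w) / k + ln k - 1))
      by (apply Rmult_le_compat_l; lra).
    assert (E1 : (erlang_n w b - 1) * ((1 + s / w) / k + ln k - 1)
                 = w * w / 2 + w * s / 2 + (erlang_n w b - 1) * (ln k - 1))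
      by (unfold k; field; split; lra).
    unfold erlang_exponent. lra. }
  unfold erlang_integrand. assert (s <= exp s) by (assert (h := exp_ineq1_le s); lra).
  apply Rle_trans with (exp s * exp (erlang_exponent w b s)).
  { apply Rmult_le_compat_r; [left; apply exp_pos|auto]. }
  rewrite <- !exp_plus. apply exp_le. fold k. nra.
Qed.

Lemma erlang_integrand_tail w b K s : 0 <= b <= K -> 8 * (K + 1) <= w -> 8 * (K + 1) <= s ->
  erlang_integrand w b s <= 2 * exp (- (1 / 2) * s).
Proof.
  intros Hb Hw Hs.
  assert (Hw0 : 0 < w) by lra.
  set (x := s / w).
  assert (Hx : 0 <= x) by (unfold x; apply Rdiv_le_0_compat; lra).
  assert (Hsx : s = w * x) by (unfold x; field; lra).
  assert (L := ln1p_le_rational x Hx).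
  assert (Hww : 0 <= w * w) by nra.
  assert (Hn : w * w / 2 <= erlang_n w b - 1) by (unfold erlang_n; nra).
  assert (HE : erlang_exponent w b s <= - s).
  { unfold erlang_exponent. fold x.
    assert (L2 : (erlang_n w b - 1) * ln (1 + x)
                 <= (erlang_n w b - 1) * (x - x * x / (2 * (1 + x))))
      by (apply Rmult_le_compat_l; lra).
    assert (Q : (K + 1) * s <= (erlang_n w b - 1) * (x * x / (2 * (1 + x)))).
    { apply Rle_trans with (w * w / 2 * (x * x / (2 * (1 + x)))).
      2:{ apply Rmult_le_compat_r; [apply Rdiv_le_0_compat; nra|lra]. }
      replace (w * w / 2 * (x * x / (2 * (1 + x)))) with ((s * s) / (4 * (1 + x)))
        by (rewrite Hsx; field; lra).
      apply (Rmult_le_reg_r (4 * (1 + x))); [lra|].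
      replace (s * s / (4 * (1 + x)) * (4 * (1 + x))) with (s * s) by (field; lra).
      assert (8 * (K + 1) * x <= s) by (rewrite Hsx; nra).
      nra. }
    assert (E1 : (erlang_n w b - 1) * x = w * s + b * s - x)
      by (rewrite Hsx; unfold erlang_n; field; lra).
    nra. }
  unfold erlang_integrand. apply Rle_trans with (s * exp (- s)).
  { apply Rmult_le_compat_l; [lra|apply exp_le; lra]. }
  apply mul_exp_neg_le; lra.
Qed.

Lemma erlang_A_limit w b : 4 <= w -> 0 <= b ->
  tends_at_infty (RInt (erlang_integrand w b) 0) (erlang_A w b)
  /\ (forall c, 0 <= c -> RInt (erlang_integrand w b) 0 c <= erlang_A w b).
Proof.
  intros Hw Hb.
  destruct (dominated_int_to_inf (erlang_integrand w b) 0
    (exp (w * w / 2 + (erlang_n w b - 1) * (ln (2 * (erlang_n w b - 1) / (w * w)) - 1))) 1)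
    as [H1 [H2 _]]; try lra.
  - left; apply exp_pos.
  - intros; apply erlang_integrand_cont; lra.
  - intros; apply erlang_integrand_nonneg; lra.
  - intros; apply erlang_integrand_dom; lra.
  - split; auto.
Qed.

Lemma erlang_A_tail w b K T : 0 <= b <= K -> 8 * (K + 1) <= w -> 8 * (K + 1) <= T ->
  erlang_A w b <= RInt (erlang_integrand w b) 0 T + 4 * exp (- (1 / 2) * T).
Proof.
  intros Hb Hw HT.
  destruct (dominated_int_to_inf (erlang_integrand w b) (8 * (K + 1)) 2 (1 / 2))
    as [_ [_ H3]]; try lra.
  - intros; apply erlang_integrand_cont; lra.
  - intros; apply erlang_integrand_nonneg; lra.
  - intros; apply (erlang_integrand_tail w b K); lra.
  - specialize (H3 T HT). replace (2 / (1 / 2)) with 4 in H3 by field. exact H3.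
Qed.

(* [A w b] grows at least linearly in [b]; this makes [alpha_tilde] small for large [b]. *)
Lemma erlang_A_lower w b : 12 <= w -> 0 <= b -> (4 + b) / 48 <= erlang_A w b.
Proof.
  intros Hw Hb.
  destruct (erlang_A_limit w b ltac:(lra) Hb) as [_ H]. eapply Rle_trans; [|apply (H 1); lra].
  assert (E := RInt_Chasles (erlang_integrand w b) 0 (1/2) 1
                 (ex_RInt_erlang w b 0 (1/2) ltac:(lra) ltac:(lra) ltac:(lra))
                 (ex_RInt_erlang w b (1/2) 1 ltac:(lra) ltac:(lra) ltac:(lra))).
  unfold plus in E; simpl in E.
  assert (E0 : 0 <= RInt (erlang_integrand w b) 0 (1/2)).
  { apply RInt_ge_0; [lra|apply ex_RInt_erlang; lra|]. intros; apply erlang_integrand_nonneg; lra. }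
  set (v := exp (b / 4 - 3 / 4)).
  assert (Hv : (4 + b) / 12 <= v).
  { unfold v. replace (b / 4 - 3 / 4) with (b / 4 + - (3 / 4)) by ring. rewrite exp_plus, exp_Ropp.
    assert (h1 := exp_ineq1_le (b / 4)).
    assert (h2 : exp (3 / 4) <= 3)
      by (apply Rle_trans with (exp 1); [apply exp_le; lra|apply exp_le_3]).
    assert (h3 := exp_pos (3/4)).
    assert (/ 3 <= / exp (3 / 4)) by (apply Rinv_le_contravar; lra).
    assert (0 <= exp (b / 4)) by (left; apply exp_pos).
    assert (exp (b / 4) * / 3 <= exp (b / 4) * / exp (3 / 4)) by (apply Rmult_le_compat_l; lra).
    lra. }
  (* on [1/2, 1] the exponent is at least [b/4 - 3/4] *)
  assert (E1 : RInt (fun _ => 1 / 2 * v) (1/2) 1 <= RInt (erlang_integrand w b) (1/2) 1).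
  { apply RInt_le; [lra|apply ex_RInt_const|apply ex_RInt_erlang; lra|].
    intros s Hs. unfold erlang_integrand, v.
    assert (Hb2 := erlang_exponent_near_gauss w b s ltac:(lra) Hb ltac:(lra)).
    assert (h := Rle_abs (- (erlang_exponent w b s - (b * s - s * s / 2)))).
    rewrite Rabs_Ropp in h.
    assert (Hq : (1 + b) * (s + s * s + s * s * s) / w <= (1 + b) / 4).
    { apply (Rmult_le_reg_r w); [lra|].
      replace ((1 + b) * (s + s * s + s * s * s) / w * w) with ((1 + b) * (s + s * s + s * s * s))
        by (field; lra).
      assert (s + s * s + s * s * s <= 3) by nra. nra. }
    assert (exp (b / 4 - 3 / 4) <= exp (erlang_exponent w b s)) by (apply exp_le; nra).
    assert (0 <= exp (b / 4 - 3 / 4)) by (left; apply exp_pos).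
    nra. }
  rewrite RInt_const in E1. unfold scal in E1; simpl in E1; unfold mult in E1; simpl in E1.
  lra.
Qed.

Definition erlang_density (w b : R) : R -> R :=
  fun t => t * exp (- (w * w) * t) * Rpower (1 + t) (w * w + b * w - 1).

Lemma erlang_density_cont w b t : 0 <= t -> continuous (erlang_density w b) t.
Proof.
  intro Ht. apply continuous_of_ex_derive. unfold erlang_density, Rpower. auto_derive. lra.
Qed.

Lemma erlang_density_scale w b c : 0 < w -> 0 <= c ->
  RInt (erlang_density w b) 0 c = RInt (erlang_integrand w b) 0 (c * w) / (w * w).
Proof.
  intros Hw Hc.
  assert (Hex : ex_RInt (erlang_density w b) (/ w * 0 + 0) (/ w * (c * w) + 0)).
  { replace (/ w * 0 + 0) with 0 by ring. replace (/ w * (c * w) + 0) with c by (field; lra).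
    apply ex_RInt_of_continuous. intros x Hx. rewrite Rmin_left in Hx by lra.
    apply erlang_density_cont. lra. }
  assert (E := @RInt_comp_lin R_CompleteNormedModule (erlang_density w b) (/ w) 0 0 (c * w) Hex).
  replace (/ w * 0 + 0) with 0 in E by ring.
  replace (/ w * (c * w) + 0) with c in E by (field; lra).
  match type of E with ?L = _ =>
    assert (E3 : L = / (w * w) * RInt (erlang_integrand w b) 0 (c * w)) end.
  { transitivity (RInt (fun y => / (w * w) * erlang_integrand w b y) 0 (c * w)).
    - apply RInt_ext. intros x _. unfold scal; simpl; unfold mult; simpl.
      unfold erlang_density, erlang_integrand, Rpower, erlang_exponent, erlang_n.
      replace (/ w * x + 0) with (x / w) by (field; lra).
      replace ((w * w + b * w - 1) * ln (1 + x / w) - w * x)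
        with (- (w * w) * (x / w) + (w * w + b * w - 1) * ln (1 + x / w)) by (field; lra).
      rewrite exp_plus. field. lra.
    - apply RInt_scal_R. apply ex_RInt_erlang; nra. }
  rewrite <- E, E3. match goal with |- ?u = ?v => change (@eq R u v) end. unfold Rdiv. ring.
Qed.

Lemma alpha_tilde_eq w b : 4 <= w -> 0 <= b -> alpha_tilde b (w * w) = Rmin 1 (/ erlang_A w b).
Proof.
  intros Hw Hb. unfold alpha_tilde, alpha_bar.
  rewrite sqrt_square by lra.
  change (fun t => t * exp (- (w * w) * t) * Rpower (1 + t) (w * w + b * w - 1))
    with (erlang_density w b).
  rewrite (int_to_inf_eq (erlang_density w b) 0 (erlang_A w b / (w * w))).
  - f_equal. f_equal. field. lra.
  - intros c Hc. apply ex_RInt_of_continuous. intros x Hx. rewrite Rmin_left in Hx by lra.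
    apply erlang_density_cont. lra.
  - destruct (erlang_A_limit w b Hw Hb) as [HL _].
    apply (tends_at_infty_affine _ _ 0 (/ (w * w))) in HL.
    intros eps He. destruct (HL eps He) as [B HB]. exists (Rmax (B / w) 0). intros c Hc.
    assert (h1 := Rmax_l (B / w) 0). assert (h2 := Rmax_r (B / w) 0).
    rewrite erlang_density_scale by lra.
    assert (HBc : B <= c * w).
    { apply (Rmult_le_reg_r (/ w)); [apply Rinv_0_lt_compat; lra|].
      replace (c * w * / w) with c by (field; lra). unfold Rdiv in h1. lra. }
    specialize (HB (c * w) HBc). unfold Rdiv. rewrite Rmult_comm, (Rmult_comm (erlang_A w b)).
    rewrite !Rplus_0_l in HB. exact HB.
Qed.

Lemma erlang_integrand_near_gauss w b K T s : 0 <= b <= K -> 4 <= w ->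
  (1 + K) * (T + T * T + T * T * T) <= w -> 0 <= s <= T ->
  Rabs (erlang_integrand w b s - ngauss b s)
  <= T * ((1 + K) * (T + T * T + T * T * T) / w * exp (K * T + 1)).
Proof.
  intros Hb Hw Hc Hs.
  set (c1 := (1 + K) * (T + T * T + T * T * T)) in *.
  set (d := erlang_exponent w b s - (b * s - s * s / 2)).
  unfold erlang_integrand, ngauss.
  replace (s * exp (erlang_exponent w b s) - s * exp (b * s - s * s / 2))
    with (s * (exp (erlang_exponent w b s) - exp (b * s - s * s / 2))) by ring.
  rewrite Rabs_mult, (Rabs_pos_eq s) by lra.
  assert (Hd := exp_diff_abs (erlang_exponent w b s) (b * s - s * s / 2)). fold d in Hd.
  assert (Hb2 := erlang_exponent_near_gauss w b s ltac:(lra) ltac:(lra) ltac:(lra)). fold d in Hb2.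
  assert (Hq : (1 + b) * (s + s * s + s * s * s) / w <= c1 / w).
  { unfold Rdiv. apply Rmult_le_compat_r; [left; apply Rinv_0_lt_compat; lra|]. unfold c1.
    assert (s * s <= T * T) by nra. assert (s * s * s <= T * T * T) by nra.
    assert (0 <= s * s) by nra. assert (0 <= s * s * s) by nra.
    apply Rmult_le_compat; lra. }
  assert (Hc1 : c1 / w <= 1).
  { apply (Rmult_le_reg_r w); [lra|]. replace (c1 / w * w) with c1 by (field; lra). lra. }
  assert (Hexp : exp (b * s - s * s / 2 + Rabs d) <= exp (K * T + 1)).
  { apply exp_le. assert (b * s <= K * T) by nra. nra. }
  assert (0 <= Rabs d) by apply Rabs_pos.
  assert (0 <= exp (b * s - s * s / 2 + Rabs d)) by (left; apply exp_pos).
  assert (H1 : Rabs d * exp (b * s - s * s / 2 + Rabs d) <= c1 / w * exp (K * T + 1))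
    by (apply Rmult_le_compat; lra).
  assert (0 <= Rabs (exp (erlang_exponent w b s) - exp (b * s - s * s / 2))) by apply Rabs_pos.
  apply Rmult_le_compat; lra.
Qed.

(* [A w b] tends to [Ng b] as [w -> oo], uniformly for [b] in [0, K]:
   split both integrals at [T] and compare the integrands on [0, T]. *)
Lemma erlang_A_near_Ng w b K T : 0 <= b <= K -> 8 * (K + 1) <= T -> 8 * (K + 1) <= w ->
  (1 + K) * (T + T * T + T * T * T) <= w ->
  Rabs (erlang_A w b - Ng b)
  <= 8 * exp (- (1 / 2) * T) + T * (T * ((1 + K) * (T + T * T + T * T * T) / w * exp (K * T + 1))).
Proof.
  intros Hb HT Hw Hc.
  set (c1 := (1 + K) * (T + T * T + T * T * T)) in *.
  assert (HT0 : 0 <= T) by lra.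
  assert (Ha1 : RInt (erlang_integrand w b) 0 T <= erlang_A w b)
    by (apply (proj2 (erlang_A_limit w b ltac:(lra) ltac:(lra))); lra).
  assert (Ha2 := erlang_A_tail w b K T Hb Hw HT).
  assert (Hn1 : RInt (ngauss b) 0 T <= Ng b) by (apply (proj2 (Ng_limit b)); lra).
  assert (Hn2 := Ng_tail b K T Hb ltac:(lra)).
  assert (Hmid : Rabs (RInt (erlang_integrand w b) 0 T - RInt (ngauss b) 0 T)
                 <= T * (T * (c1 / w * exp (K * T + 1)))).
  { assert (HA := ex_RInt_erlang w b 0 T ltac:(lra) ltac:(lra) HT0).
    replace (RInt (erlang_integrand w b) 0 T - RInt (ngauss b) 0 T)
      with (RInt (erlang_integrand w b) 0 T + (-1) * RInt (ngauss b) 0 T) by ring.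
    rewrite <- (RInt_lin (erlang_integrand w b) (ngauss b) (-1) 0 T HA (ex_RInt_ngauss _ _ _)).
    replace (T * (T * (c1 / w * exp (K * T + 1))))
      with ((T - 0) * (T * (c1 / w * exp (K * T + 1)))) by ring.
    apply (abs_RInt_le_const _ 0 T _ HT0 (ex_RInt_lin _ _ _ _ _ HA (ex_RInt_ngauss _ _ _))).
    intros s Hs. replace (erlang_integrand w b s + -1 * ngauss b s)
      with (erlang_integrand w b s - ngauss b s) by ring.
    apply erlang_integrand_near_gauss; unfold c1 in *; lra. }
  assert (h := Rle_abs (RInt (erlang_integrand w b) 0 T - RInt (ngauss b) 0 T)).
  assert (h' := Rle_abs (- (RInt (erlang_integrand w b) 0 T - RInt (ngauss b) 0 T))).
  rewrite Rabs_Ropp in h'.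
  assert (0 < exp (- (1 / 2) * T)) by apply exp_pos.
  apply Rabs_le. split; lra.
Qed.

(** The upper bound [UB] at [lambda = w^2]: [UB b (w^2) = 1 / D w b] (Lemma [UB_eq]),
    where [D w b = rho + gamma (Mg a + 2 / (3 sqrt n))] since [Phi a / phi a = Mg a]. *)

Definition ub_a (w b : R) : R :=
  sqrt (- 2 * erlang_n w b
        * (1 - (w * w) / erlang_n w b + ln ((w * w) / erlang_n w b))).
Definition ub_gamma (w b : R) : R := (erlang_n w b - w * w) / sqrt (erlang_n w b).
Definition ub_den (w b : R) : R :=
  w * w / erlang_n w b + ub_gamma w b * (Mg (ub_a w b) + 2 / (3 * sqrt (erlang_n w b))).

Lemma UB_eq w b : 0 < w -> 0 <= b -> UB b (w * w) = / ub_den w b.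
Proof.
  intros Hw Hb. unfold UB, ub_den, ub_gamma. cbv zeta.
  rewrite sqrt_square by lra. fold (erlang_n w b). fold (ub_a w b).
  rewrite Phi_eq. f_equal. f_equal. f_equal. f_equal.
  field. apply Rgt_not_eq, phi_pos.
Qed.

(* Writing [u = b / w], [a^2 = 2 w^2 h(u)] with [h u = (1 + u) ln (1 + u) - u],
   so that [a] is [b] up to [O (b^2 / w)]. *)
Lemma ub_a_bounds w b : 0 < w -> 0 <= b ->
  0 <= ub_a w b /\ ub_a w b <= b /\ b - ub_a w b <= b * b / (3 * w).
Proof.
  intros Hw Hb.
  set (u := b / w).
  assert (Hu : 0 <= u) by (unfold u; apply Rdiv_le_0_compat; lra).
  assert (Hbu : b = w * u) by (unfold u; field; lra).
  assert (Hn : erlang_n w b = w * w * (1 + u)) by (unfold erlang_n; rewrite Hbu; ring).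
  assert (Hr : w * w / erlang_n w b = / (1 + u)) by (rewrite Hn; field; lra).
  assert (Hl : ln (w * w / erlang_n w b) = - ln (1 + u)) by (rewrite Hr; apply ln_Rinv; lra).
  set (X := - 2 * erlang_n w b * (1 - (w * w) / erlang_n w b + ln ((w * w) / erlang_n w b))).
  assert (HX : X = 2 * (w * w) * ((1 + u) * ln (1 + u) - u)).
  { unfold X. rewrite Hl, Hr, Hn. field. lra. }
  assert (H0 := h_nonneg u Hu). assert (H1 := h_le_order2 u Hu). assert (H2 := h_ge_order3 u Hu).
  assert (HX0 : 0 <= X) by (rewrite HX; apply Rmult_le_pos; nra).
  assert (HXb : X <= b * b).
  { rewrite HX, Hbu.
    assert (2 * (w * w) * ((1 + u) * ln (1 + u) - u) <= 2 * (w * w) * (u * u / 2))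
      by (apply Rmult_le_compat_l; nra).
    nra. }
  assert (HXl : b * b - b * b * b / (3 * w) <= X).
  { rewrite HX. replace (b * b - b * b * b / (3 * w)) with (2 * (w * w) * (u * u / 2 - u * u * u / 6))
      by (rewrite Hbu; field; lra).
    apply Rmult_le_compat_l; nra. }
  unfold ub_a. fold X.
  assert (Hs0 := sqrt_pos X).
  assert (Hsq : sqrt X * sqrt X = X) by (apply sqrt_sqrt; lra).
  assert (Hle : sqrt X <= b) by (rewrite <- (sqrt_square b) by lra; apply sqrt_le_1_alt; exact HXb).
  split; [lra|split; [lra|]].
  destruct (Req_dec b 0) as [Hb0|Hb0].
  - rewrite Hb0 in *. replace (0 * 0 / (3 * w)) with 0 by (field; lra). lra.
  - (* [(b - a)(b + a) = b^2 - a^2 <= b^3 / (3 w)] and [b + a >= b] *)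
    assert ((b - sqrt X) * (b + sqrt X) <= b * b * b / (3 * w)) by nra.
    apply (Rmult_le_reg_r b); [lra|].
    replace (b * b / (3 * w) * b) with (b * b * b / (3 * w)) by (field; lra).
    assert ((b - sqrt X) * b <= (b - sqrt X) * (b + sqrt X)) by (apply Rmult_le_compat_l; lra).
    lra.
Qed.

Lemma sqrt_erlang_n w b : 0 < w -> 0 <= b ->
  sqrt (erlang_n w b) * sqrt (erlang_n w b) = erlang_n w b /\ w <= sqrt (erlang_n w b).
Proof.
  intros Hw Hb. unfold erlang_n. split; [apply sqrt_sqrt; nra|].
  rewrite <- (sqrt_square w) at 1 by lra. apply sqrt_le_1_alt. nra.
Qed.

Lemma ub_gamma_bounds w b : 0 < w -> 0 <= b ->
  ub_gamma w b = b * w / sqrt (erlang_n w b)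
  /\ 0 <= ub_gamma w b <= b /\ b - ub_gamma w b <= b * b / w.
Proof.
  intros Hw Hb. destruct (sqrt_erlang_n w b Hw Hb) as [Hq2 Hqw].
  set (q := sqrt (erlang_n w b)) in *.
  assert (Hg : ub_gamma w b = b * w / q) by (unfold ub_gamma; fold q; unfold erlang_n; field; lra).
  rewrite Hg. split; [reflexivity|]. split; [split|].
  - apply Rdiv_le_0_compat; nra.
  - apply (Rmult_le_reg_r q); [lra|]. replace (b * w / q * q) with (b * w) by (field; lra). nra.
  - assert (Hqw2 : q - w <= b / 2).
    { assert ((q - w) * (q + w) = b * w) by (unfold erlang_n in Hq2; nra). nra. }
    replace (b - b * w / q) with (b * (q - w) / q) by (field; lra).
    apply (Rmult_le_reg_r (q * w)); [nra|].
    replace (b * (q - w) / q * (q * w)) with (b * (q - w) * w) by (field; lra).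
    replace (b * b / w * (q * w)) with (b * b * q) by (field; lra).
    assert (b * (q - w) <= b * (b / 2)) by (apply Rmult_le_compat_l; lra).
    assert (b * (q - w) * w <= b * (b / 2) * q) by (apply Rmult_le_compat; nra). nra.
Qed.

(* Since [Mg a >= 1/2], [D w b >= gamma / 2], and [D w b >= 1] as soon as [w >= 2]. *)
Lemma ub_den_lower w b : 2 <= w -> 0 <= b ->
  1 <= ub_den w b /\ ub_gamma w b / 2 <= ub_den w b.
Proof.
  intros Hw Hb. destruct (sqrt_erlang_n w b ltac:(lra) Hb) as [Hq2 Hqw].
  destruct (ub_gamma_bounds w b ltac:(lra) Hb) as [Hg [[Hg0 _] _]].
  unfold ub_den. rewrite Hg in *.
  set (n := erlang_n w b) in *. set (q := sqrt n) in *.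
  assert (Hn : w * w <= n) by (unfold n, erlang_n; nra).
  assert (HM : 1 / 2 <= Mg (ub_a w b)).
  { eapply Rle_trans; [apply Mg0_ge_half|apply Mg_mono]. apply (ub_a_bounds w b); lra. }
  assert (Hq3 : 0 <= 2 / (3 * q)) by (apply Rdiv_le_0_compat; lra).
  assert (b * w / q * (1 / 2) <= b * w / q * (Mg (ub_a w b) + 2 / (3 * q)))
    by (apply Rmult_le_compat_l; lra).
  assert (0 <= w * w / n) by (apply Rdiv_le_0_compat; nra).
  split; [|lra].
  assert (Hk : 1 <= w * w / n + b * w / q / 2).
  { replace (w * w / n + b * w / q / 2) with ((2 * w * w * q + b * w * n) / (2 * n * q))
      by (field; split; nra).
    apply (Rmult_le_reg_r (2 * n * q)); [nra|].
    replace ((2 * w * w * q + b * w * n) / (2 * n * q) * (2 * n * q))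
      with (2 * w * w * q + b * w * n) by (field; split; nra).
    assert (Hn2 : 2 * q <= n) by nra.
    assert (b * w * (2 * q) <= b * w * n) by (apply Rmult_le_compat_l; nra).
    assert (n * q = w * w * q + b * w * q) by (unfold n, erlang_n; ring). lra. }
  lra.
Qed.

(* For [b >= 1], [gamma^2 = b^2 w^2 / n >= b / 2], hence [UB^2 <= 8 / b]. *)
Lemma UB_sq_le w b : 2 <= w -> 1 <= b -> / ub_den w b * / ub_den w b <= 8 / b.
Proof.
  intros Hw Hb. destruct (sqrt_erlang_n w b ltac:(lra) ltac:(lra)) as [Hq2 Hqw].
  destruct (ub_gamma_bounds w b ltac:(lra) ltac:(lra)) as [Hg _].
  destruct (ub_den_lower w b Hw ltac:(lra)) as [HD1 HD2].
  set (g := ub_gamma w b) in *. set (D := ub_den w b) in *.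
  assert (Hgg : b / 2 <= g * g).
  { rewrite Hg. set (q := sqrt (erlang_n w b)) in *.
    replace (b * w / q * (b * w / q)) with (b * b * w * w / (q * q)) by (field; lra).
    rewrite Hq2.
    unfold erlang_n. apply (Rmult_le_reg_r (w * w + b * w)); [nra|].
    replace (b * b * w * w / (w * w + b * w) * (w * w + b * w)) with (b * b * w * w)
      by (field; nra).
    assert (b * w * w <= b * b * w * w) by nra. assert (b * b * w <= b * b * w * w) by nra. nra. }
  assert (Hg0 : 0 <= g) by (rewrite Hg; apply Rdiv_le_0_compat; nra).
  assert (HDD : b / 8 <= D * D) by nra.
  replace (/ D * / D) with (/ (D * D)) by (field; lra).
  replace (8 / b) with (/ (b / 8)) by (field; lra).
  apply Rinv_le_contravar; lra.
Qed.

Lemma ub_den_near_Ng w b K : 2 <= w -> 0 <= b <= K ->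
  Rabs (ub_den w b - Ng b) <= (2 * K + K * K * Mg K + K * K * K * Ng K) / w.
Proof.
  intros Hw Hb. destruct (sqrt_erlang_n w b ltac:(lra) ltac:(lra)) as [Hq2 Hqw].
  destruct (ub_gamma_bounds w b ltac:(lra) ltac:(lra)) as [Hg [[Hg0 Hgb] Hbg]].
  destruct (ub_a_bounds w b ltac:(lra) ltac:(lra)) as [Ha0 [Hab Hba]].
  unfold ub_den. rewrite Ng_eq.
  set (n := erlang_n w b) in *. set (q := sqrt n) in *.
  set (a := ub_a w b) in *. set (g := ub_gamma w b) in *.
  assert (HMa1 : 1 / 2 <= Mg a) by (eapply Rle_trans; [apply Mg0_ge_half|apply Mg_mono; lra]).
  assert (HMa2 : Mg a <= Mg K) by (apply Mg_mono; lra).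
  assert (He1 : Mg b - Mg a <= (b - a) * Ng b) by (assert (h := Mg_increment a b Hab); lra).
  assert (He0 : 0 <= Mg b - Mg a) by (assert (h := Mg_mono a b Hab); lra).
  assert (HN0 := Ng_nonneg b). assert (HNK : Ng b <= Ng K) by (apply Ng_mono; lra).
  (* [t = 1 - rho = b w / n <= b / w], and [gamma * 2 / (3 q) = 2 t / 3] *)
  set (t := b * w / n).
  assert (Ht1 : 1 - w * w / n = t) by (unfold t, n, erlang_n; field; nra).
  assert (Ht1b : t <= b / w).
  { unfold t. apply (Rmult_le_reg_r (n * w)); [unfold n, erlang_n; nra|].
    replace (b * w / n * (n * w)) with (b * w * w) by (field; unfold n, erlang_n; nra).
    replace (b / w * (n * w)) with (b * n) by (field; lra). unfold n, erlang_n. nra. }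
  assert (Ht0 : 0 <= t) by (unfold t; apply Rdiv_le_0_compat; unfold n, erlang_n; nra).
  assert (Ht4 : g * (2 / (3 * q)) = 2 / 3 * t) by (rewrite Hg; unfold t; rewrite <- Hq2; field; lra).
  replace (w * w / n + g * (Mg a + 2 / (3 * q)) - (1 + b * Mg b))
    with (- (1 - w * w / n) - (b - g) * Mg a - b * (Mg b - Mg a) + g * (2 / (3 * q))) by ring.
  rewrite Ht1, Ht4.
  assert (X1 : (b - g) * Mg a <= b * b / w * Mg K) by (apply Rmult_le_compat; lra).
  assert (X2 : b * (Mg b - Mg a) <= b * (b * b / (3 * w) * Ng K)).
  { apply Rmult_le_compat_l; [lra|]. eapply Rle_trans; [exact He1|]. apply Rmult_le_compat; lra. }
  assert (X3 : 0 <= (b - g) * Mg a) by (apply Rmult_le_pos; lra).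
  assert (X4 : 0 <= b * (Mg b - Mg a)) by (apply Rmult_le_pos; lra).
  assert (Y : b / w + b * b / w * Mg K + b * (b * b / (3 * w)) * Ng K + b / w
              <= (2 * K + K * K * Mg K + K * K * K * Ng K) / w).
  { apply (Rmult_le_reg_r w); [lra|].
    replace ((b / w + b * b / w * Mg K + b * (b * b / (3 * w)) * Ng K + b / w) * w)
      with (2 * b + b * b * Mg K + b * b * b / 3 * Ng K) by (field; lra).
    replace ((2 * K + K * K * Mg K + K * K * K * Ng K) / w * w)
      with (2 * K + K * K * Mg K + K * K * K * Ng K) by (field; lra).
    assert (b * b <= K * K) by nra. assert (b * b * b <= K * K * K) by nra.
    assert (b * b * Mg K <= K * K * Mg K) by (apply Rmult_le_compat_r; lra).
    assert (b * b * b / 3 * Ng K <= K * K * K * Ng K).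
    { apply Rmult_le_compat_r; [lra|]. assert (0 <= b * b * b) by (repeat apply Rmult_le_pos; lra). lra. }
    lra. }
  apply Rabs_le. split; lra.
Qed.

(* [x |-> min 1 (1 / x)] is 1-Lipschitz where it matters: next to [B >= 1]. *)
Lemma min_inv_dist A B : 0 < A -> 1 <= B -> Rabs (Rmin 1 (/ A) - / B) <= Rabs (A - B).
Proof.
  intros HA HB.
  assert (HiB : 0 < / B) by (apply Rinv_0_lt_compat; lra).
  assert (HiB1 : / B <= 1) by (rewrite <- Rinv_1; apply Rinv_le_contravar; lra).
  destruct (Rle_dec 1 A) as [h|h].
  - rewrite Rmin_right by (rewrite <- Rinv_1; apply Rinv_le_contravar; lra).
    replace (/ A - / B) with ((B - A) / (A * B)) by (field; lra).
    unfold Rdiv. rewrite Rabs_mult, (Rabs_pos_eq (/ (A * B))) by (left; apply Rinv_0_lt_compat; nra).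
    rewrite <- Rabs_Ropp. replace (- (B - A)) with (A - B) by ring.
    assert (/ (A * B) <= 1) by (rewrite <- Rinv_1; apply Rinv_le_contravar; nra).
    assert (0 <= Rabs (A - B)) by apply Rabs_pos. nra.
  - rewrite Rmin_left by (left; apply (Rmult_lt_reg_r A); [lra|]; rewrite Rinv_l; lra).
    rewrite Rabs_pos_eq by lra. rewrite Rabs_left1 by lra.
    assert (1 - / B <= B - 1).
    { apply (Rmult_le_reg_r B); [lra|]. replace ((1 - / B) * B) with (B - 1) by (field; lra). nra. }
    lra.
Qed.

Lemma ratio_small X e w : 0 <= X -> 0 < e -> 0 < w -> X / e <= w -> X / w <= e.
Proof.
  intros HX He Hw H. apply (Rmult_le_reg_r w); [lra|].
  replace (X / w * w) with X by (field; lra).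
  apply (Rmult_le_compat_r e) in H; [|lra].
  replace (X / e * e) with X in H by (field; lra). lra.
Qed.

(* For [b] in a bounded range, [A w b] and [D w b] are eventually [eps]-close:
   both are within [eps / 3 + eps / 3] resp. [eps / 3] of [Ng b]. *)
Lemma erlang_A_near_ub_den K eps : 0 <= K -> 0 < eps ->
  exists W, 12 <= W /\ forall w b, W <= w -> 0 <= b <= K ->
    Rabs (erlang_A w b - ub_den w b) <= eps.
Proof.
  intros HK He.
  destruct (exp_decay_small (1 / 2) 4 (eps / 3) ltac:(lra) ltac:(lra) ltac:(lra) (8 * (K + 1)))
    as [T [HT1 [HT0 HT3]]].
  specialize (HT3 T (Rle_refl T)). replace (4 / (1 / 2)) with 8 in HT3 by field.
  set (c1 := (1 + K) * (T + T * T + T * T * T)).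
  set (G := T * (T * (c1 * exp (K * T + 1)))).
  set (D := 2 * K + K * K * Mg K + K * K * K * Ng K).
  assert (HMK : 0 <= Mg K) by (assert (h := Mg0_ge_half); assert (h' := Mg_mono 0 K HK); lra).
  assert (HNK := Ng_nonneg K).
  assert (HD : 0 <= D) by (unfold D; assert (0 <= K * K * Mg K) by (repeat apply Rmult_le_pos; lra);
                           assert (0 <= K * K * K * Ng K) by (repeat apply Rmult_le_pos; lra); lra).
  assert (Hc1 : 0 <= c1) by (unfold c1; assert (0 <= T * T) by nra;
                             assert (0 <= T * T * T) by (repeat apply Rmult_le_pos; lra);
                             apply Rmult_le_pos; lra).
  assert (HG : 0 <= G)
    by (unfold G; assert (0 < exp (K * T + 1)) by apply exp_pos;
        apply Rmult_le_pos; [lra|apply Rmult_le_pos; [lra|apply Rmult_le_pos; lra]]).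
  assert (HG3 : 0 <= G / (eps / 3)) by (apply Rdiv_le_0_compat; lra).
  assert (HD3 : 0 <= D / (eps / 3)) by (apply Rdiv_le_0_compat; lra).
  exists (8 * (K + 1) + 12 + c1 + G / (eps / 3) + D / (eps / 3)). split; [lra|].
  intros w b Hw Hb.
  assert (E1 := erlang_A_near_Ng w b K T Hb HT1 ltac:(lra) ltac:(unfold c1 in Hw; lra)).
  assert (E2 := ub_den_near_Ng w b K ltac:(lra) Hb). fold D in E2.
  replace (T * (T * ((1 + K) * (T + T * T + T * T * T) / w * exp (K * T + 1)))) with (G / w) in E1
    by (unfold G, c1; field; lra).
  assert (G / w <= eps / 3) by (apply ratio_small; lra).
  assert (D / w <= eps / 3) by (apply ratio_small; lra).
  replace (erlang_A w b - ub_den w b) with ((erlang_A w b - Ng b) - (ub_den w b - Ng b)) by ring.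
  eapply Rle_trans; [apply Rabs_triang|]. rewrite Rabs_Ropp. lra.
Qed.

(* For large [b], [alpha_tilde] is small ([A >= (4 + b) / 48]) ... *)
Lemma alpha_small_large_beta w b eps : 12 <= w -> 0 < eps -> 96 / eps <= b ->
  Rmin 1 (/ erlang_A w b) <= eps / 2.
Proof.
  intros Hw He Hb.
  assert (Hb0 : 0 <= b) by (assert (0 < 96 / eps) by (apply Rdiv_lt_0_compat; lra); lra).
  assert (HA := erlang_A_lower w b Hw Hb0).
  eapply Rle_trans; [apply Rmin_r|].
  apply Rle_trans with (/ ((4 + b) / 48)); [apply Rinv_le_contravar; [apply Rdiv_lt_0_compat|]; lra|].
  replace (/ ((4 + b) / 48)) with (48 / (4 + b)) by (field; lra).
  apply (Rmult_le_reg_r (4 + b)); [lra|]. replace (48 / (4 + b) * (4 + b)) with 48 by (field; lra).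
  apply (Rmult_le_compat_r eps) in Hb; [|lra].
  replace (96 / eps * eps) with 96 in Hb by (field; lra). nra.
Qed.

(* ... and so is [UB] ([UB^2 <= 8 / b]). *)
Lemma UB_small_large_beta w b eps : 2 <= w -> 1 <= b -> 0 < eps -> 32 / (eps * eps) <= b ->
  / ub_den w b <= eps / 2.
Proof.
  intros Hw Hb1 He Hb.
  assert (Hsq := UB_sq_le w b Hw Hb1).
  destruct (ub_den_lower w b Hw ltac:(lra)) as [HD _].
  assert (Hi : 0 < / ub_den w b) by (apply Rinv_0_lt_compat; lra).
  assert (H8 : 8 / b <= eps / 2 * (eps / 2)).
  { apply (Rmult_le_reg_r b); [lra|]. replace (8 / b * b) with 8 by (field; lra).
    apply (Rmult_le_compat_r (eps * eps)) in Hb; [|nra].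
    replace (32 / (eps * eps) * (eps * eps)) with 32 in Hb by (field; lra). nra. }
  destruct (Rle_dec (/ ub_den w b) (eps / 2)) as [h|h]; [exact h|]. nra.
Qed.

Lemma alpha_tilde_UB_uniform eps : 0 < eps -> exists Lam, forall lam, Lam <= lam -> forall b, 0 <= b ->
  0 <= alpha_tilde b lam <= 1 /\ 0 <= UB b lam <= 1 /\ Rabs (alpha_tilde b lam - UB b lam) <= eps.
Proof.
  intros He.
  assert (H96 : 0 < 96 / eps) by (apply Rdiv_lt_0_compat; lra).
  assert (H32 : 0 < 32 / (eps * eps)) by (apply Rdiv_lt_0_compat; nra).
  set (K := 1 + 96 / eps + 32 / (eps * eps)).
  destruct (erlang_A_near_ub_den K eps ltac:(unfold K; lra) He) as [W [HW12 HW]].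
  exists (W * W). intros lam Hlam b Hb.
  set (w := sqrt lam).
  assert (Hwl : lam = w * w) by (unfold w; rewrite sqrt_sqrt; nra).
  assert (HwW : W <= w)
    by (unfold w; rewrite <- (sqrt_square W) by lra; apply sqrt_le_1_alt; lra).
  rewrite Hwl. clearbody w.
  rewrite (alpha_tilde_eq w b), (UB_eq w b) by lra.
  assert (HA : 0 < erlang_A w b) by (assert (h := erlang_A_lower w b ltac:(lra) Hb); lra).
  destruct (ub_den_lower w b ltac:(lra) Hb) as [HD _].
  assert (HiA : 0 < / erlang_A w b) by (apply Rinv_0_lt_compat; lra).
  assert (HiD : 0 < / ub_den w b) by (apply Rinv_0_lt_compat; lra).
  assert (HiD1 : / ub_den w b <= 1) by (rewrite <- Rinv_1; apply Rinv_le_contravar; lra).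
  assert (Hm : 0 <= Rmin 1 (/ erlang_A w b) <= 1) by (split; [apply Rmin_glb; lra|apply Rmin_l]).
  split; [exact Hm|]. split; [lra|].
  destruct (Rle_dec b K) as [hbK|hbK].
  - eapply Rle_trans; [apply min_inv_dist; lra|]. apply HW; lra.
  - assert (Ha := alpha_small_large_beta w b eps ltac:(lra) He ltac:(unfold K in hbK; lra)).
    assert (Hu := UB_small_large_beta w b eps ltac:(lra) ltac:(unfold K in hbK; lra) He
                    ltac:(unfold K in hbK; lra)).
    apply Rabs_le. split; lra.
Qed.

Lemma prodL_bounds L x : (forall i, (i < L)%nat -> 0 <= x i <= 1) -> 0 <= prodL L x <= 1.
Proof.
  induction L as [|k IH]; intros H; simpl; [lra|].
  assert (Hk := H k ltac:(lia)). assert (IH' := IH ltac:(intros i Hi; apply H; lia)).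
  split; [apply Rmult_le_pos; lra|]. rewrite <- (Rmult_1_r 1). apply Rmult_le_compat; lra.
Qed.

Lemma prodL_dist L x y : (forall i, (i < L)%nat -> 0 <= x i <= 1 /\ 0 <= y i <= 1) ->
  Rabs (prodL L x - prodL L y) <= sumL L (fun i => Rabs (x i - y i)).
Proof.
  induction L as [|k IH]; intros H; simpl.
  - rewrite Rminus_diag, Rabs_R0. lra.
  - assert (Hk := H k ltac:(lia)).
    assert (IH' := IH ltac:(intros i Hi; apply H; lia)).
    assert (By := prodL_bounds k y ltac:(intros i Hi; apply H; lia)).
    replace (prodL k x * x k - prodL k y * y k)
      with ((prodL k x - prodL k y) * x k + prodL k y * (x k - y k)) by ring.
    eapply Rle_trans; [apply Rabs_triang|]. rewrite !Rabs_mult.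
    rewrite (Rabs_pos_eq (x k)), (Rabs_pos_eq (prodL k y)) by lra.
    assert (0 <= Rabs (prodL k x - prodL k y)) by apply Rabs_pos.
    assert (0 <= Rabs (x k - y k)) by apply Rabs_pos.
    assert (Rabs (prodL k x - prodL k y) * x k <= Rabs (prodL k x - prodL k y))
      by (rewrite <- (Rmult_1_r (Rabs _)) at 2; apply Rmult_le_compat_l; lra).
    assert (prodL k y * Rabs (x k - y k) <= Rabs (x k - y k))
      by (rewrite <- (Rmult_1_l (Rabs (x k - y k))) at 2; apply Rmult_le_compat_r; lra).
    lra.
Qed.

Lemma sumL_le_const L f e : (forall i, (i < L)%nat -> f i <= e) -> sumL L f <= INR L * e.
Proof.
  induction L as [|k IH]; intros H; cbn [sumL]; [simpl; lra|].
  assert (IH' := IH ltac:(intros i Hi; apply H; lia)). assert (Hk := H k ltac:(lia)).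
  rewrite S_INR. lra.
Qed.

Lemma eventually_forall_lt L (P : nat -> nat -> Prop) :
  (forall i, (i < L)%nat -> exists N, forall m, (N <= m)%nat -> P i m) ->
  exists N, forall m, (N <= m)%nat -> forall i, (i < L)%nat -> P i m.
Proof.
  induction L as [|k IH]; intros H.
  - exists O. intros m _ i Hi. lia.
  - destruct (IH ltac:(intros i Hi; apply H; lia)) as [N1 H1].
    destruct (H k ltac:(lia)) as [N2 H2].
    exists (Nat.max N1 N2). intros m Hm i Hi.
    destruct (Nat.eq_dec i k) as [->|hne]; [apply H2; lia|apply H1; lia].
Qed.

Lemma f_obj_near_g_obj L c delta lam0 m beta e : 0 < delta ->
  (forall i, (i < L)%nat ->
     0 <= alpha_tilde (beta i) (INR m * lam0 i) <= 1 /\ 0 <= UB (beta i) (INR m * lam0 i) <= 1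
     /\ Rabs (alpha_tilde (beta i) (INR m * lam0 i) - UB (beta i) (INR m * lam0 i)) <= e) ->
  Rabs (f_obj L c delta lam0 m beta - g_obj L c delta lam0 m beta) <= delta * (INR L * e).
Proof.
  intros Hd H. unfold f_obj, g_obj.
  set (S := sumL L (fun i => c i (beta i))).
  set (PA := prodL L (fun i => 1 - alpha_tilde (beta i) (INR m * lam0 i))).
  set (PU := prodL L (fun i => 1 - UB (beta i) (INR m * lam0 i))).
  replace (S + delta * (1 - PA) - (S + delta * (1 - PU))) with (delta * (PU - PA)) by ring.
  rewrite Rabs_mult, (Rabs_pos_eq delta) by lra.
  apply Rmult_le_compat_l; [lra|].
  eapply Rle_trans; [apply prodL_dist|].
  - intros i Hi. destruct (H i Hi) as [h1 [h2 _]]. split; lra.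
  - apply sumL_le_const. intros i Hi. destruct (H i Hi) as [_ [_ h3]].
    replace (1 - UB (beta i) (INR m * lam0 i) - (1 - alpha_tilde (beta i) (INR m * lam0 i)))
      with (alpha_tilde (beta i) (INR m * lam0 i) - UB (beta i) (INR m * lam0 i)) by ring.
    exact h3.
Qed.

Lemma minimizer_of_close_objective {X : Type} (P : X -> Prop) (f g : X -> R) xF xG eta :
  P xF -> P xG -> (forall x, P x -> f xF <= f x) -> (forall x, P x -> g xG <= g x) ->
  (forall x, P x -> Rabs (f x - g x) <= eta) -> 0 <= f xG - f xF <= 2 * eta.
Proof.
  intros HF HG HFmin HGmin Hclose.
  assert (M1 := HFmin xG HG). assert (M2 := HGmin xF HF).
  assert (C1 := Rle_abs (f xG - g xG)).
  assert (C2 := Rle_abs (- (f xF - g xF))). rewrite Rabs_Ropp in C2.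
  assert (C3 := Hclose xG HG). assert (C4 := Hclose xF HF).
  lra.
Qed.

Theorem theorem5 (L : nat) (delta : R) (lam0 : nat -> R) (c : nat -> R -> R)
  (betaF betaG : nat -> nat -> R) :
  (1 <= L)%nat ->
  0 < delta ->
  (forall i, (i < L)%nat -> 0 < lam0 i) ->
  (forall i, (i < L)%nat -> forall x, 0 <= x ->
     limit1_in (c i) (fun y => 0 <= y) (c i x) x) ->
  (forall i, (i < L)%nat -> forall x y, 0 <= x -> x < y -> c i x < c i y) ->
  (forall m, (1 <= m)%nat -> nonneg_vec L (betaF m) /\
     forall beta, nonneg_vec L beta ->
       f_obj L c delta lam0 m (betaF m) <= f_obj L c delta lam0 m beta) ->
  (forall m, (1 <= m)%nat -> nonneg_vec L (betaG m) /\
     forall beta, nonneg_vec L beta ->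
       g_obj L c delta lam0 m (betaG m) <= g_obj L c delta lam0 m beta) ->
  Un_cv (fun m => f_obj L c delta lam0 m (betaG m) - f_obj L c delta lam0 m (betaF m)) 0.
Proof.
  intros HL Hd Hlam _ _ HF HG eps He.
  assert (HLr : 1 <= INR L) by (apply (le_INR 1); exact HL).
  set (e := eps / (4 * delta * INR L)).
  assert (He' : 0 < e) by (unfold e; apply Rdiv_lt_0_compat; [lra|]; apply Rmult_lt_0_compat; lra).
  destruct (alpha_tilde_UB_uniform e He') as [Lam HLam].
  (* eventually every arrival rate [m lam0_i] exceeds [Lam] *)
  destruct (eventually_forall_lt L (fun i m => Lam <= INR m * lam0 i)) as [N HN].
  { intros i Hi. destruct (INR_unbounded (Lam / lam0 i)) as [N HN]. exists N. intros m Hm.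
    assert (Hl := Hlam i Hi). assert (INR N <= INR m) by (apply le_INR; exact Hm).
    apply (Rmult_le_reg_r (/ lam0 i)); [apply Rinv_0_lt_compat; lra|].
    replace (INR m * lam0 i * / lam0 i) with (INR m) by (field; lra). unfold Rdiv in HN. lra. }
  exists (Nat.max N 1). intros m Hm. unfold R_dist. rewrite Rminus_0_r.
  destruct (HF m ltac:(lia)) as [HFn HFmin]. destruct (HG m ltac:(lia)) as [HGn HGmin].
  assert (Hgap := minimizer_of_close_objective (nonneg_vec L)
    (f_obj L c delta lam0 m) (g_obj L c delta lam0 m) (betaF m) (betaG m) (delta * (INR L * e))
    HFn HGn HFmin HGmin
    (fun beta Hbeta => f_obj_near_g_obj L c delta lam0 m beta e Hd
       (fun i Hi => HLam _ (HN m ltac:(lia) i Hi) (beta i) (Hbeta i Hi)))).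
  assert (Hval : delta * (INR L * e) = eps / 4) by (unfold e; field; lra).
  rewrite Rabs_pos_eq by lra. lra.
Qed.
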